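(* Let $k\ge 1$ and consider $k$ linear constraints $\mathcal{C}_i[y]=\kappa_i$, $i=1,\dots,k$, on $y:\mathbb{R}\to\mathbb{R}$, with $\kappa_i\in\mathbb{R}$. Let $s_1,\dots,s_k$ be linearly independent support functions with invertible support matrix $\mathbb{S}_{ij}=\mathcal{C}_i[s_j]$, $\alpha=\mathbb{S}^{-1}$, switching functions $\phi_j(x)=\sum_m s_m(x)\alpha_{mj}$, projection functionals $\rho_j(x,g(x))=\kappa_j-\mathcal{C}_j[g]$, and constrained expression $y(x,g(x))=g(x)+\sum_{j}\phi_j(x)\rho_j(x,g(x))$. Then for a given function $f$ satisfying the constraints, the free function $g$ such that $y(x,g(x))=f(x)$ is not unique. In other words, the constrained expression is not an injective functional from the set of all free functions to the set of all functions satisfying the constraints.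
   Context: Each $\mathcal{C}_i$ is a linear operator returning the operand function evaluated in the same way as the dependent variable appears in the $i$-th constraint (combinations of values, derivatives and integrals of the function). A free function is any $g:\mathbb{R}\to\mathbb{R}$ for which all $\mathcal{C}_i[g]$ are defined. A function $f$ satisfies the constraints if $\mathcal{C}_i[f]=\kappa_i$ for all $i$. *)

From mathcomp Require Import all_boot all_order all_algebra.
From mathcomp Require Import reals.
Set Implicit Arguments. Unset Strict Implicit. Unset Printing Implicit Defensive.
Import Order.TTheory GRing.Theory Num.Theory.
Local Open Scope ring_scope.

(* The free functions: the set [adm] of g : R -> R on which all C_i[g] are
   defined.  The constraints C_i are linear operators on this (linear) set. *)
Definition linear_constraints (R : realType) (k : nat)
    (adm : (R -> R) -> Prop) (C : 'I_k -> (R -> R) -> R) : Prop :=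
  [/\ adm (fun _ => 0),
      (forall f g, adm f -> adm g -> adm (fun x => f x + g x)),
      (forall (a : R) f, adm f -> adm (fun x => a * f x)),
      (forall i f g, adm f -> adm g ->
          C i (fun x => f x + g x) = C i f + C i g) &
      (forall i (a : R) f, adm f -> C i (fun x => a * f x) = a * C i f)].

Definition satisfies (R : realType) (k : nat) (C : 'I_k -> (R -> R) -> R)
    (kappa : 'I_k -> R) (f : R -> R) : Prop :=
  forall i, C i f = kappa i.

Definition lin_indep (R : realType) (k : nat) (s : 'I_k -> R -> R) : Prop :=
  forall c : 'I_k -> R, (forall x, \sum_(j < k) c j * s j x = 0) ->
    forall j, c j = 0.

Definition support_matrix (R : realType) (k : nat)
    (C : 'I_k -> (R -> R) -> R) (s : 'I_k -> R -> R) : 'M[R]_k :=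
  \matrix_(i < k, j < k) C i (s j).

Definition switching (R : realType) (k : nat)
    (C : 'I_k -> (R -> R) -> R) (s : 'I_k -> R -> R) (j : 'I_k) (x : R) : R :=
  \sum_(m < k) s m x * invmx (support_matrix C s) m j.

Definition projection (R : realType) (k : nat)
    (C : 'I_k -> (R -> R) -> R) (kappa : 'I_k -> R) (j : 'I_k)
    (g : R -> R) : R :=
  kappa j - C j g.

Definition constrained_expr (R : realType) (k : nat)
    (C : 'I_k -> (R -> R) -> R) (kappa : 'I_k -> R) (s : 'I_k -> R -> R)
    (g : R -> R) : R -> R :=
  fun x => g x + \sum_(j < k) switching C s j x * projection C kappa j g.

(* The constrained expression is invariant under adding a support function
   to the free function: the correction term sum_j phi_j(x) C_j[s_i] equals
   s_i(x) because alpha is the inverse of the support matrix.  A function f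
   that satisfies the constraints is its own constrained expression, so f and
   f + s_i are two free functions producing f, and they differ because
   linearly independent support functions are nonzero. *)
From mathcomp Require Import all_boot all_order all_algebra.
From mathcomp Require Import reals.
From Stdlib Require Import FunctionalExtensionality.
Set Implicit Arguments. Unset Strict Implicit. Unset Printing Implicit Defensive.
Import GRing.Theory.
Local Open Scope ring_scope.

Section ConstrainedExpression.

Variables (R : realType) (k : nat) (C : 'I_k -> (R -> R) -> R)
  (kappa : 'I_k -> R) (s : 'I_k -> R -> R).

Lemma switchingE j x :
  switching C s j x = (\row_m s m x *m invmx (support_matrix C s)) 0 j.
Proof. by rewrite mxE; apply: eq_bigr => m _; rewrite mxE. Qed.

Lemma sum_switching_support (i : 'I_k) x :
  support_matrix C s \in unitmx ->
  \sum_(j < k) switching C s j x * C j (s i) = s i x.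
Proof.
move=> unitS.
have -> : \sum_(j < k) switching C s j x * C j (s i)
    = (\row_m s m x *m invmx (support_matrix C s) *m support_matrix C s) 0 i.
  rewrite mxE; apply: eq_bigr => j _.
  by rewrite switchingE [support_matrix _ _ _ _]mxE.
by rewrite -mulmxA mulVmx // mulmx1 mxE.
Qed.

Lemma constrained_expr_id f :
  satisfies C kappa f -> constrained_expr C kappa s f = f.
Proof.
move=> sat_f; apply: functional_extensionality => x.
rewrite /constrained_expr big1 ?addr0 // => j _.
by rewrite /projection sat_f subrr mulr0.
Qed.

Lemma constrained_expr_add_support (adm : (R -> R) -> Prop) g (i : 'I_k) :
  (forall j f h, adm f -> adm h -> C j (fun x => f x + h x) = C j f + C j h) ->
  support_matrix C s \in unitmx -> adm g -> adm (s i) ->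
  constrained_expr C kappa s (fun x => g x + s i x)
  = constrained_expr C kappa s g.
Proof.
move=> C_add unitS adm_g adm_si; apply: functional_extensionality => x.
rewrite /constrained_expr /projection.
under eq_bigr => j _ do rewrite C_add // opprD addrA mulrDr mulrN.
by rewrite big_split sumrN /= sum_switching_support // addrACA subrr addr0.
Qed.

End ConstrainedExpression.

Lemma lin_indep_neq0 (R : realType) (k : nat) (s : 'I_k -> R -> R) i :
  lin_indep s -> s i <> (fun _ => 0).
Proof.
move=> indep si0.
suff : (i == i)%:R = 0 :> R by rewrite eqxx => /eqP; rewrite oner_eq0.
apply: (indep (fun j => (j == i)%:R)) => x.
rewrite (bigD1 i) //= eqxx mul1r si0 big1 ?addr0 // => j /negbTE ->.
by rewrite mul0r.
Qed.

Theorem theorem3 (R : realType) (k : nat) (hk : (0 < k)%N)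
    (adm : (R -> R) -> Prop) (C : 'I_k -> (R -> R) -> R)
    (kappa : 'I_k -> R) (s : 'I_k -> R -> R) :
  linear_constraints adm C ->
  (forall j, adm (s j)) ->
  lin_indep s ->
  support_matrix C s \in unitmx ->
  forall f : R -> R, adm f -> satisfies C kappa f ->
  exists g1 g2 : R -> R,
    [/\ adm g1, adm g2, g1 <> g2,
        constrained_expr C kappa s g1 = f &
        constrained_expr C kappa s g2 = f].
Proof.
move=> [_ adm_add _ C_add _] adm_s indep unitS f adm_f sat_f.
set i := Ordinal hk.
have y_f := constrained_expr_id s sat_f.
exists f, (fun x => f x + s i x); split => //.
- exact: adm_add.
- move=> same; apply: (lin_indep_neq0 (i := i) indep).
  apply: functional_extensionality => x.
  by move: (congr1 (fun g => g x - f x) same); rewrite subrr addrAC subrr add0r.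
- by rewrite (constrained_expr_add_support _ C_add).
Qed.
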